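(* For every constant $\epsilon<\frac12$ the following holds. There is no pair of maps $g_r,g_c$, where $g_r$ assigns to each row payoff matrix $R\in[0,1]^{n\times n}$ a mixed strategy over rows and $g_c$ assigns to each pair $(R,C)$ of matrices in $[0,1]^{n\times n}$ a mixed strategy over columns, such that for every $n$ and every bimatrix game $(R,C)$ the profile $(g_r(R),g_c(R,C))$ is an $\epsilon$-approximate Nash equilibrium. In other words, with unlimited one-way communication (from the row player to the column player only) it is impossible to guarantee an $\epsilon$-approximate Nash equilibrium for any constant $\epsilon<\frac12$.
   Context: A bimatrix game $(R,C)$ has payoff matrices with entries in $[0,1]$ for the row and column player; mixed strategies $\mathbf{x},\mathbf{y}$ give payoffs $\mathbf{x}^TR\mathbf{y}$ and $\mathbf{x}^TC\mathbf{y}$. $(\mathbf{x},\mathbf{y})$ is an $\epsilon$-approximate Nash equilibrium if for all pure strategies $i$: $\mathbf{e}_i^TR\mathbf{y}\le\mathbf{x}^TR\mathbf{y}+\epsilon$ and $\mathbf{x}^TC\mathbf{e}_i\le\mathbf{x}^TC\mathbf{y}+\epsilon$. In one-way communication the row player may send information to the column player but receives none, so his output depends only on $R$, while the column player's output may depend on $C$ and on everything the row player sends (hence, with unlimited communication, on all of $R$). *)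

From mathcomp Require Import all_boot all_order all_algebra.
From mathcomp Require Import reals.
Set Implicit Arguments. Unset Strict Implicit. Unset Printing Implicit Defensive.
Import Order.TTheory GRing.Theory Num.Theory.
Local Open Scope ring_scope.

Definition unit_payoff (R : realType) (n : nat) (A : 'M[R]_n) : Prop :=
  forall i j, 0 <= A i j /\ A i j <= 1.

Definition mixed (R : realType) (n : nat) (x : 'cV[R]_n) : Prop :=
  (forall i, 0 <= x i 0) /\ \sum_i x i 0 = 1.

Definition eps_NE (R : realType) (n : nat) (eps : R) (A B : 'M[R]_n)
    (x y : 'cV[R]_n) : Prop :=
  (forall i, (A *m y) i 0 <= (x^T *m A *m y) 0 0 + eps) /\
  (forall j, (x^T *m B) 0 j <= (x^T *m B *m y) 0 0 + eps).

From mathcomp Require Import all_boot all_order all_algebra.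
From mathcomp Require Import reals lra.
Import Order.TTheory GRing.Theory Num.Theory.
Local Open Scope ring_scope.
Set Implicit Arguments. Unset Strict Implicit.

(* Rows and columns are subsets of {0, ..., m-1}; against a singleton column
   {k}, a row S earns 1 iff #|S| <= s and k \in S.  The row strategy x depends
   only on this payoff, so by averaging some j lies in a row of size <= s with
   probability p <= s/m.  Letting the column player be paid only for playing
   {j} forces weight y_j >= 1 - eps on {j}, and then the best row of size <= s
   containing j beats x by at least (y_j - (1 - y_j)/s)(1 - p), which is about
   1 - eps > eps when 1 << s << m. *)

Lemma ler_sum_subpred (R : numDomainType) (I : finType) (A : {pred I})
    (F : I -> R) :
  (forall i, 0 <= F i) -> \sum_(i in A) F i <= \sum_i F i.
Proof.
move=> F0; rewrite [leRHS](bigID (mem A)) /= lerDl.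
by apply: sumr_ge0 => i _.
Qed.

Lemma subr_convex (R : comRingType) (I : finType) (x F : I -> R) (a : R) :
  \sum_i x i = 1 -> a - \sum_i x i * F i = \sum_i x i * (a - F i).
Proof.
move=> x1; rewrite -{1}[a]mul1r -x1 mulr_suml -sumrB.
by apply: eq_bigr => i _; rewrite mulrBr.
Qed.

Section FiniteGame.
Variables (R : realType) (X : finType).

Definition payoff (M : X -> X -> R) (x y : X -> R) : R :=
  \sum_S x S * \sum_T M S T * y T.

Definition eps_NE_fun (eps : R) (A B : X -> X -> R) (x y : X -> R) : Prop :=
  (forall S, \sum_T A S T * y T <= payoff A x y + eps) /\
  (forall T, \sum_S x S * B S T <= payoff B x y + eps).

Definition target_game (T0 : X) (S T : X) : R := (T == T0)%:R.

Lemma payoff_target_game (T0 : X) (x y : X -> R) :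
  \sum_S x S = 1 -> payoff (target_game T0) x y = y T0.
Proof.
move=> x1; have row S : \sum_T target_game T0 S T * y T = y T0.
  under eq_bigr => T _ do rewrite mulr_natl mulrb.
  by rewrite -big_mkcond big_pred1_eq.
rewrite /payoff; under eq_bigr => S _ do rewrite row.
by rewrite -mulr_suml x1 mul1r.
Qed.

Lemma eps_NE_target_game (eps : R) (A : X -> X -> R) (T0 : X) (x y : X -> R) :
  \sum_S x S = 1 -> eps_NE_fun eps A (target_game T0) x y -> 1 - eps <= y T0.
Proof.
move=> x1 [_ /(_ T0)]; rewrite payoff_target_game //.
under eq_bigr => S _ do rewrite /target_game eqxx mulr1.
by rewrite x1; lra.
Qed.

Section Transport.
Variable N : nat.
Hypothesis eN : #|X| = N.+1.

Definition elt_of_ord (i : 'I_N.+1) : X := enum_val (cast_ord (esym eN) i).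
Definition ord_of_elt (S : X) : 'I_N.+1 := cast_ord eN (enum_rank S).

Lemma ord_of_eltK : cancel ord_of_elt elt_of_ord.
Proof. by move=> S; rewrite /elt_of_ord /ord_of_elt cast_ordK enum_rankK. Qed.

Lemma elt_of_ordK : cancel elt_of_ord ord_of_elt.
Proof. by move=> i; rewrite /elt_of_ord /ord_of_elt enum_valK cast_ordKV. Qed.

Lemma sum_ord_of_elt (F : 'I_N.+1 -> R) : \sum_i F i = \sum_S F (ord_of_elt S).
Proof.
rewrite (reindex ord_of_elt) //.
by exists elt_of_ord => ? _; [exact: ord_of_eltK | exact: elt_of_ordK].
Qed.

Definition mx_of_fun (M : X -> X -> R) : 'M[R]_N.+1 :=
  \matrix_(i, j) M (elt_of_ord i) (elt_of_ord j).

Definition fun_of_cv (u : 'cV[R]_N.+1) (S : X) : R := u (ord_of_elt S) 0.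

Lemma unit_payoff_mx_of_fun (M : X -> X -> R) :
  (forall S T, 0 <= M S T <= 1) -> unit_payoff (mx_of_fun M).
Proof. by move=> M01 i j; rewrite mxE; apply/andP/M01. Qed.

Lemma mixed_fun_of_cv (u : 'cV[R]_N.+1) :
  mixed u -> (forall S, 0 <= fun_of_cv u S) /\ \sum_S fun_of_cv u S = 1.
Proof. by case=> u0 u1; split=> [S|]; [exact: u0 | rewrite -u1 sum_ord_of_elt]. Qed.

Lemma mulmx_of_funE (M : X -> X -> R) (v : 'cV[R]_N.+1) (S : X) :
  (mx_of_fun M *m v) (ord_of_elt S) 0 = \sum_T M S T * fun_of_cv v T.
Proof.
by rewrite mxE sum_ord_of_elt; apply: eq_bigr => T _; rewrite mxE !ord_of_eltK.
Qed.

Lemma tr_mulmx_of_funE (M : X -> X -> R) (u : 'cV[R]_N.+1) (T : X) :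
  (u^T *m mx_of_fun M) 0 (ord_of_elt T) = \sum_S fun_of_cv u S * M S T.
Proof.
by rewrite mxE sum_ord_of_elt; apply: eq_bigr => S _; rewrite !mxE !ord_of_eltK.
Qed.

Lemma form_mx_of_funE (M : X -> X -> R) (u v : 'cV[R]_N.+1) :
  (u^T *m mx_of_fun M *m v) 0 0 = payoff M (fun_of_cv u) (fun_of_cv v).
Proof.
rewrite mxE sum_ord_of_elt.
under eq_bigr => U _ do rewrite tr_mulmx_of_funE mulr_suml.
rewrite exchange_big /=; apply: eq_bigr => S _.
by rewrite mulr_sumr; apply: eq_bigr => U _; rewrite mulrA.
Qed.

Lemma eps_NE_mx_of_fun (eps : R) (A B : X -> X -> R) (u v : 'cV[R]_N.+1) :
  eps_NE eps (mx_of_fun A) (mx_of_fun B) u v ->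
  eps_NE_fun eps A B (fun_of_cv u) (fun_of_cv v).
Proof.
case=> hrow hcol; split=> [S|T].
  by have := hrow (ord_of_elt S); rewrite mulmx_of_funE form_mx_of_funE.
by have := hcol (ord_of_elt T); rewrite tr_mulmx_of_funE form_mx_of_funE.
Qed.

End Transport.
End FiniteGame.

Section SubsetGame.
Variables (R : realType) (m s : nat).
Local Notation X := {set 'I_m}.

Definition weight (y : X -> R) (S : X) : R := \sum_(k in S) y [set k].

Definition subset_game (S T : X) : R :=
  ((#|S| <= s)%N && (T \in [set [set k] | k in S]))%:R.

Definition cover_prob (x : X -> R) (j : 'I_m) : R :=
  \sum_S x S * ((#|S| <= s)%N && (j \in S))%:R.

Lemma subset_game_row (y : X -> R) (S : X) :
  \sum_T subset_game S T * y T = if (#|S| <= s)%N then weight y S else 0.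
Proof.
rewrite /subset_game; case: ifP => hS /=; last first.
  by apply: big1 => T _; rewrite mul0r.
rewrite /weight -(big_imset _ (h := set1)) /=; last by move=> ? ? _ _; apply: set1_inj.
rewrite [RHS]big_mkcond /=; apply: eq_bigr => T _.
by case: (T \in _); rewrite ?mul1r ?mul0r.
Qed.

Lemma sum_singletons_le (y : X -> R) :
  (forall T, 0 <= y T) -> \sum_k y [set k] <= \sum_T y T.
Proof.
move=> y0; rewrite -(big_imset _ (h := set1)) /=; last by move=> ? ? _ _; apply: set1_inj.
exact: ler_sum_subpred.
Qed.

Lemma sum_cover_prob_le (x : X -> R) :
  (forall S, 0 <= x S) -> \sum_S x S = 1 -> \sum_j cover_prob x j <= s%:R.
Proof.
move=> x0 x1; have -> : s%:R = \sum_S x S * s%:R :> R by rewrite -mulr_suml x1 mul1r.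
rewrite /cover_prob exchange_big /=.
apply: ler_sum => S _; rewrite -mulr_sumr ler_wpM2l //.
case: (boolP (#|S| <= s)%N) => hS /=; last by rewrite big1 // ler0n.
rewrite -natr_sum ler_nat (leq_trans _ hS) // -sum1_card [leqRHS]big_mkcond.
by apply: leq_sum => i _; case: (i \in S).
Qed.

Lemma exists_rarely_covered (x : X -> R) :
  (0 < m)%N -> (forall S, 0 <= x S) -> \sum_S x S = 1 ->
  exists j, m%:R * cover_prob x j <= s%:R.
Proof.
move=> m0 x0 x1.
have [j _ jmin] := @arg_minP _ _ 'I_m (Ordinal m0) predT (cover_prob x) isT.
exists j; apply: le_trans (sum_cover_prob_le x0 x1).
rewrite mulr_natl -[m in _ *+ m]card_ord -sumr_const.
by apply: ler_sum => i _; apply: jmin.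
Qed.

Section Weights.
Variable y : X -> R.
Hypothesis y0 : forall k, 0 <= y [set k].
Hypothesis y1 : \sum_k y [set k] <= 1.

Lemma weight_setU1 (j : 'I_m) (S : X) :
  j \notin S -> weight y (j |: S) = y [set j] + weight y S.
Proof. by move=> jS; rewrite /weight big_setU1. Qed.

Lemma weight_setU1_le1 (j : 'I_m) (S : X) :
  j \notin S -> y [set j] + weight y S <= 1.
Proof.
by move=> jS; rewrite -weight_setU1 //; apply: le_trans y1; apply: ler_sum_subpred.
Qed.

Lemma exists_light_elt (S : X) :
  (0 < #|S|)%N -> exists2 k, k \in S & y [set k] *+ #|S| <= weight y S.
Proof.
case/card_gt0P => k1 k1S.
have [k kS kmin] := @arg_minP _ _ 'I_m k1 (mem S) (fun k => y [set k]) k1S.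
exists k => //; rewrite /weight -sumr_const; apply: ler_sum => i iS; exact: kmin.
Qed.

(* Exchanging the lightest element of S for j costs at most its weight,
   which is at most (1 - y [set j]) / s when #|S| = s. *)
Lemma weight_swap_le (j : 'I_m) (T : X) : (0 < s)%N ->
  (forall S : X, (#|S| <= s)%N -> j \in S -> weight y S <= weight y T) ->
  forall S : X, (#|S| <= s)%N -> j \notin S ->
  weight y S <= weight y T - y [set j] + (1 - y [set j]) / s%:R.
Proof.
move=> s0 Tmax S hS jS.
have s0R : 0 < s%:R :> R by rewrite ltr0n.
have yjS := weight_setU1_le1 jS.
have wS0 : 0 <= weight y S by apply: sumr_ge0.
move: hS; rewrite leq_eqVlt => /orP[/eqP hS | hS].
- have [k kS hk] : exists2 k, k \in S & y [set k] *+ #|S| <= weight y S.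
    by apply: exists_light_elt; rewrite hS.
  have jSk : j \notin S :\ k by rewrite !inE negb_and jS orbT.
  have cardS : (#|j |: (S :\ k)| <= s)%N.
    by rewrite cardsU1 jSk -hS (cardsD1 k S) kS.
  have := Tmax _ cardS (setU11 _ _); rewrite weight_setU1 //.
  have -> : weight y S = y [set k] + weight y (S :\ k) by rewrite /weight (big_setD1 k).
  have : y [set k] <= (1 - y [set j]) / s%:R.
    by rewrite ler_pdivlMr // -mulr_natr -hS; lra.
  lra.
- have := Tmax (j |: S); rewrite weight_setU1 // cardsU1 jS => /(_ hS (setU11 _ _)).
  have : 0 <= (1 - y [set j]) / s%:R by apply: divr_ge0; lra.
  lra.
Qed.

End Weights.

Lemma subset_game_regret (x y : X -> R) (j : 'I_m) : (0 < s)%N ->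
  (forall S, 0 <= x S) -> \sum_S x S = 1 ->
  (forall T, 0 <= y T) -> \sum_T y T = 1 ->
  exists T : X, (y [set j] - (1 - y [set j]) / s%:R) * (1 - cover_prob x j) <=
                \sum_U subset_game T U * y U - payoff subset_game x y.
Proof.
move=> s0 x0 x1 y0 y1.
have y0' k : 0 <= y [set k] by [].
have y1' : \sum_k y [set k] <= 1 by rewrite -y1 sum_singletons_le.
pose admissible := [pred S : X | (#|S| <= s)%N && (j \in S)].
have j1 : admissible [set j] by apply/andP; rewrite cards1 set11.
have [T /andP[Ts jT] Tmax] := @arg_maxP _ _ X [set j] admissible (weight y) j1.
have {}Tmax (S : X) : (#|S| <= s)%N -> j \in S -> weight y S <= weight y T.
  by move=> hS jS; apply: Tmax; apply/andP.
exists T; rewrite subset_game_row Ts /payoff.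
under eq_bigr => S _ do rewrite subset_game_row.
set c := y [set j] - _.
rewrite mulrBr mulr1 /cover_prob mulr_sumr.
under [in L in L <= _]eq_bigr => S _ do rewrite mulrCA.
rewrite !subr_convex //; apply: ler_sum => S _; rewrite ler_wpM2l //.
have yj1 : y [set j] <= 1 by apply: le_trans y1'; rewrite (bigD1 j) //= lerDl sumr_ge0.
have q0 : 0 <= (1 - y [set j]) / s%:R by rewrite divr_ge0 ?ler0n // subr_ge0.
case: (boolP (#|S| <= s)%N) => hS /=; last first.
  by have := Tmax [set j]; rewrite cards1 /weight big_set1 /c => /(_ s0 (set11 j)); lra.
case: (boolP (j \in S)) => jS /=.
  by rewrite mulr1 subrr subr_ge0 Tmax.
by have := weight_swap_le y0' y1' s0 Tmax hS jS; rewrite /c; lra.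
Qed.

End SubsetGame.

Lemma regret_gt_eps (R : realFieldType) (eps Y p s m : R) :
  0 < s -> 1 < s * (1 - 2 * eps) -> 2 * s < m * (1 - 2 * eps) ->
  1 - eps <= Y -> Y <= 1 -> m * p <= s ->
  eps < (Y - (1 - Y) / s) * (1 - p).
Proof.
move=> s0 hs hm hY Y1 hp.
set q := (1 - Y) / s.
have hq : q * s = 1 - Y by rewrite /q divfK // gt_eqF.
have d0 : 0 < 1 - 2 * eps by nra.
have m0 : 0 < m by nra.
have q0 : 0 <= q by nra.
have hqd : 2 * q < 1 - 2 * eps by nra.
have hpd : 2 * p < 1 - 2 * eps by nra.
nra.
Qed.

Lemma exists_game_size (R : realType) (eps : R) : eps < 1 / 2 ->
  exists s m : nat, [/\ (0 < s)%N, (0 < m)%N, 1 < s%:R * (1 - 2 * eps) &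
                        2 * s%:R < m%:R * (1 - 2 * eps)].
Proof.
move=> heps; set d := 1 - 2 * eps.
have d0 : 0 < d by rewrite /d; lra.
pose s := Num.bound (1 / d); pose m := Num.bound (2 * s%:R / d).
have hs : 1 / d < s%:R by apply: archi_boundP; rewrite divr_ge0 // ltW.
have hm : 2 * s%:R / d < m%:R by apply: archi_boundP; rewrite divr_ge0 ?mulr_ge0 ?ltW.
by exists s, m; split=> //; rewrite -ltr_pdivrMr.
Qed.

Theorem theorem3 (R : realType) (eps : R) :
  eps < 1 / 2 ->
  ~ exists (gr : forall n : nat, 'M[R]_n.+1 -> 'cV[R]_n.+1)
           (gc : forall n : nat, 'M[R]_n.+1 -> 'M[R]_n.+1 -> 'cV[R]_n.+1),
      forall (n : nat) (A B : 'M[R]_n.+1),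
        unit_payoff A -> unit_payoff B ->
        [/\ mixed (gr n A), mixed (gc n A B) & eps_NE eps A B (gr n A) (gc n A B)].
Proof.
move=> heps [gr [gc NE]].
have [s [m [s0 m0 hs hm]]] := exists_game_size heps.
have [N eN] : exists N, #|{set 'I_m}| = N.+1.
  by exists #|{set 'I_m}|.-1; rewrite prednK //; apply/card_gt0P; exists set0.
pose A := mx_of_fun eN (subset_game R s).
have uA : unit_payoff A.
  by apply: unit_payoff_mx_of_fun => S T; rewrite ler0n lern1 leq_b1.
have [/(mixed_fun_of_cv eN)[x0 x1] _ _] := NE N A A uA uA.
have [j hj] := exists_rarely_covered s m0 x0 x1.
pose B := mx_of_fun eN (target_game R [set j]).
have uB : unit_payoff B.
  by apply: unit_payoff_mx_of_fun => S T; rewrite ler0n lern1 leq_b1.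
have [_ /(mixed_fun_of_cv eN)[y0 y1] /eps_NE_mx_of_fun NE_AB] := NE N A B uA uB.
have hY := eps_NE_target_game x1 NE_AB.
have Y1 : fun_of_cv eN (gc N A B) [set j] <= 1.
  by rewrite -y1 (bigD1 [set j]) //= lerDl sumr_ge0.
have [T hT] := subset_game_regret j s0 x0 x1 y0 y1.
have := regret_gt_eps _ hs hm hY Y1 hj; rewrite ltr0n => /(_ s0).
have := NE_AB.1 T; lra.
Qed.
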